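(* Let $t:\Sigma^*\to\Omega^*$ be a partial function with suffix-closed domain. If $X\subseteq\mathrm{dom}(t)$ contains a linear fooling set for $t$, then the $\overleftarrow{t}$-growth of $X$ is exponential.
   Context: The suffix expansion $\overleftarrow{t}$ maps $a_1\cdots a_n\in\mathrm{dom}(t)$ to the sequence $(t(a_1\cdots a_n),t(a_2\cdots a_n),\dots,t(a_n))$. The $\overleftarrow{t}$-growth of $X$ is $n\mapsto|\overleftarrow{t}(X\cap\Sigma^{\le n})|$; exponential means $\ge c^n$ for some $c>1$ and infinitely many $n$. A linear fooling scheme for $t$ is $(u_2,v_2,u,v,Z)$ with $u_2,v_2,u,v\in\Sigma^*$, $Z\subseteq\Sigma^*$, $u_2$ a suffix of $u$, $v_2$ a suffix of $v$, $|u_2|=|v_2|$, $\{u_2,v_2\}\{u,v\}^*Z\subseteq\mathrm{dom}(t)$, and for every $n\in\mathbb N$ there is $z_n\in Z$ with $|z_n|\in O(n)$ and $t(u_2wz_n)\neq t(v_2wz_n)$ for all $w\in\{u,v\}^{\le n}$. The set $\{u_2,v_2\}\{u,v\}^*Z$ is a linear fooling set for $t$; $X$ contains one if some linear fooling set is a subset of $X$. *)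

From mathcomp Require Import all_boot.
From Stdlib Require Import Reals ClassicalEpsilon.

Set Implicit Arguments.
Unset Strict Implicit.
Unset Printing Implicit Defensive.

Section Defs.
Variables (Sigma Omega : finType).

Definition ptrans := seq Sigma -> option (seq Omega).

Definition in_dom (t : ptrans) (w : seq Sigma) : Prop := t w <> None.

Definition suffix_closed_dom (t : ptrans) : Prop :=
  forall u v : seq Sigma, in_dom t (u ++ v) -> in_dom t v.

Definition is_suffix (x y : seq Sigma) : Prop := exists p, y = p ++ x.

Definition suffixes (w : seq Sigma) : seq (seq Sigma) :=
  [seq drop i w | i <- iota 0 (size w)].

Definition suffix_expansion (t : ptrans) (w : seq Sigma) : seq (option (seq Omega)) :=
  [seq t s | s <- suffixes w].

Definition words_upto (n : nat) : seq (seq Sigma) :=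
  flatten [seq [seq val w | w <- enum [set: k.-tuple Sigma]] | k <- iota 0 n.+1].

Definition decP (P : Prop) : bool :=
  if excluded_middle_informative P then true else false.

Definition growth (t : ptrans) (X : seq Sigma -> Prop) (n : nat) : nat :=
  size (undup [seq suffix_expansion t w | w <- words_upto n & decP (X w)]).

Definition exponential (f : nat -> nat) : Prop :=
  exists c : R, (1 < c)%R /\ forall N : nat, exists n : nat, (N <= n)%N /\ (c ^ n <= INR (f n))%R.

Definition in_star2 (u v : seq Sigma) (w : seq Sigma) : Prop :=
  exists bs : seq bool, w = flatten [seq if b then u else v | b <- bs].

Definition in_star2_le (u v : seq Sigma) (n : nat) (w : seq Sigma) : Prop :=
  exists bs : seq bool, (size bs <= n)%N /\ w = flatten [seq if b then u else v | b <- bs].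

Definition fooling_set (u2 v2 u v : seq Sigma) (Z : seq Sigma -> Prop) (x : seq Sigma) : Prop :=
  exists a w z, (a = u2 \/ a = v2) /\ in_star2 u v w /\ Z z /\ x = a ++ w ++ z.

Definition linear_fooling_scheme (t : ptrans) (u2 v2 u v : seq Sigma)
    (Z : seq Sigma -> Prop) : Prop :=
  [/\ is_suffix u2 u, is_suffix v2 v, size u2 = size v2,
      (forall x, fooling_set u2 v2 u v Z x -> in_dom t x) &
      exists (zs : nat -> seq Sigma) (C : nat),
        forall n : nat,
          [/\ Z (zs n), (size (zs n) <= C * n.+1)%N &
              forall w, in_star2_le u v n w ->
                t (u2 ++ w ++ zs n) <> t (v2 ++ w ++ zs n)]].

Definition contains_linear_fooling_set (t : ptrans) (X : seq Sigma -> Prop) : Prop :=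
  exists u2 v2 u v Z, linear_fooling_scheme t u2 v2 u v Z /\
    (forall x, fooling_set u2 v2 u v Z x -> X x).

End Defs.

(* For each n, the 2^n words u2 w z_n with w in {u,v}^n lie in X and have
   length O(n).  Two of them with different choice sequences have
   different suffix expansions: at the last choice where they differ, the
   suffixes starting there are u2 w' z_n and v2 w' z_n (u2, v2 being suffixes
   of u, v) for a common w' in {u,v}^(<= n), at the same position, and the
   fooling scheme says that t separates them.  Hence the growth at length
   A + B n, for constants A and B > 0, is at least 2^n, which is exponential
   with base 2^(1/(A+B)). *)

From Pilot Require Import Defs.
From Stdlib Require Import Reals Lra Lia ClassicalEpsilon.
From mathcomp Require Import all_boot zify.

Set Implicit Arguments.
Unset Strict Implicit.
Unset Printing Implicit Defensive.

Section SuffixExpansion.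
Variables (Sigma Omega : finType) (t : ptrans Sigma Omega).

Lemma size_suffix_expansion w : size (suffix_expansion t w) = size w.
Proof. by rewrite /suffix_expansion /suffixes !size_map size_iota. Qed.

Lemma nth_suffix_expansion w i :
  (i < size w)%N -> nth None (suffix_expansion t w) i = t (drop i w).
Proof.
move=> lt_iw; rewrite /suffix_expansion /suffixes -map_comp.
by rewrite (nth_map 0) ?size_iota // nth_iota.
Qed.

Lemma eq_suffix_expansion_tail (p p' y y' : seq Sigma) :
  suffix_expansion t (p ++ y) = suffix_expansion t (p' ++ y') ->
  size y = size y' -> t y = t y'.
Proof.
move=> E eq_y; have := congr1 size E.
rewrite !size_suffix_expansion !size_cat eq_y => /addIn eq_p.
case: y eq_y E => [|c y] eq_y E; first by move/esym/size0nil: eq_y => ->.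
have lt_p : (size p < size (p ++ c :: y))%N by rewrite size_cat addnS ltnS leq_addr.
have lt_p' : (size p' < size (p' ++ y'))%N by rewrite size_cat -eq_y addnS ltnS leq_addr.
have := congr1 (nth None ^~ (size p)) E; rewrite /= {2}eq_p.
by rewrite !nth_suffix_expansion // -{1}eq_p !drop_size_cat.
Qed.

Lemma mem_words_upto (x : seq Sigma) m : (size x <= m)%N -> x \in words_upto Sigma m.
Proof.
move=> le_xm; apply/flattenP.
exists [seq val w | w <- enum [set: (size x).-tuple Sigma]].
  by apply/mapP; exists (size x); rewrite // mem_iota.
by apply/mapP; exists (in_tuple x); rewrite // mem_enum in_setT.
Qed.

Lemma card_le_growth (X : seq Sigma -> Prop) (I : finType) (f : I -> seq Sigma) m :
  (forall i, X (f i)) -> (forall i, size (f i) <= m)%N ->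
  injective (fun i => suffix_expansion t (f i)) ->
  (#|I| <= growth t X m)%N.
Proof.
move=> Xf le_fm inj_f; rewrite /growth cardE -(size_map (fun i => suffix_expansion t (f i))).
apply: uniq_leq_size.
  by rewrite map_inj_uniq ?enum_uniq.
move=> _ /mapP [i _ ->]; rewrite mem_undup; apply/mapP; exists (f i) => //.
rewrite mem_filter mem_words_upto // andbT /Defs.decP.
by case: (excluded_middle_informative (X (f i))).
Qed.

End SuffixExpansion.

Section Star2Word.
Variables (Sigma : finType) (u v : seq Sigma).

Definition star2_word (bs : seq bool) : seq Sigma :=
  flatten [seq if b then u else v | b <- bs].

Lemma size_star2_word bs :
  (size (star2_word bs) <= size bs * maxn (size u) (size v))%N.
Proof.
elim: bs => [|b bs IH] //=; rewrite size_cat mulSn.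
by apply: leq_add => //; case: b; [exact: leq_maxl | exact: leq_maxr].
Qed.

Lemma star2_word_rcons bs b w :
  star2_word (rcons bs b) ++ w = star2_word bs ++ (if b then u else v) ++ w.
Proof. by rewrite /star2_word map_rcons flatten_rcons -catA. Qed.

End Star2Word.

Section FoolingWords.
Variables (Sigma Omega : finType) (t : ptrans Sigma Omega).
Variables (u2 v2 u v z : seq Sigma) (n : nat).
Hypotheses (suffix_u2 : is_suffix u2 u) (suffix_v2 : is_suffix v2 v).
Hypothesis size_u2v2 : size u2 = size v2.
Hypothesis fooling : forall w, in_star2_le u v n w -> t (u2 ++ w ++ z) <> t (v2 ++ w ++ z).
Local Notation word := (star2_word u v).

Lemma fooling_expansion_inj bs bs' s :
  size bs = size bs' -> (size bs + size s <= n)%N ->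
  suffix_expansion t (u2 ++ word bs ++ word s ++ z) =
  suffix_expansion t (u2 ++ word bs' ++ word s ++ z) -> bs = bs'.
Proof.
elim/last_ind: bs bs' s => [|bs b IH] bs' s; first by case: bs'.
case/lastP: bs' => [|bs' b']; first by rewrite size_rcons.
rewrite !size_rcons !star2_word_rcons => -[eq_size] le_n.
have [<-|neq_b] := eqVneq b b' => E.
  by congr rcons; apply: (IH _ (b :: s)); rewrite //= -?catA //; lia.
have suffix_choice c : exists p, (if c then u else v) = p ++ (if c then u2 else v2).
  by case: c; [case: suffix_u2 | case: suffix_v2] => p ->; exists p.
have [p eq_p] := suffix_choice b; have [p' eq_p'] := suffix_choice b'.
have t_eq : t ((if b then u2 else v2) ++ word s ++ z) =
            t ((if b' then u2 else v2) ++ word s ++ z).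
  apply: (@eq_suffix_expansion_tail _ _ _ (u2 ++ word bs ++ p)
                                          (u2 ++ word bs' ++ p')).
    by move: E; rewrite eq_p eq_p' -!catA.
  by rewrite !size_cat; case: (b); case: (b'); rewrite /= ?size_u2v2.
have star2_s : in_star2_le u v n (word s) by exists s; split => //; lia.
by move: t_eq; case: (b) (b') neq_b => [] [] // _ => [|/esym] /(fooling star2_s).
Qed.

End FoolingWords.

Section ExponentialGrowth.
Local Open Scope R_scope.

Lemma INR_expn m k : INR (m ^ k)%N = INR m ^ k.
Proof. by elim: k => [|k IH] //; rewrite expnS mult_INR IH. Qed.

Lemma exponential_of_pow2_le (f : nat -> nat) (A B : nat) :
  (0 < B)%N -> (forall k, 2 ^ k <= f (A + B * k))%N -> exponential f.
Proof.
move=> B_gt0 le_f.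
have K_gt0 : 0 < INR (A + B) by apply: lt_0_INR; lia.
pose c := Rpower 2 (/ INR (A + B)).
have cK : c ^ (A + B) = 2.
  rewrite /c -Rpower_pow; last exact: exp_pos.
  by rewrite Rpower_mult Rinv_l ?Rpower_1 //; lra.
have c_gt1 : 1 < c.
  rewrite /c -(Rpower_O 2); last lra.
  by apply: Rpower_lt; [lra | apply: Rinv_0_lt_compat].
exists c; split => // N; exists (A + B * N.+1)%N; split; first nia.
apply: (Rle_trans _ (c ^ ((A + B) * N.+1))).
  by apply: Rle_pow; [lra | apply/leP; nia].
rewrite pow_mult cK -[2]/(INR 2) -INR_expn; apply/le_INR/leP/le_f.
Qed.

End ExponentialGrowth.

Theorem proposition5 (Sigma Omega : finType) (t : ptrans Sigma Omega)
    (X : seq Sigma -> Prop) :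
  suffix_closed_dom t ->
  (forall w, X w -> in_dom t w) ->
  contains_linear_fooling_set t X ->
  exponential (growth t X).
Proof.
move=> _ _ [u2 [v2 [u [v [Z [[su2 sv2 size_u2v2 _ [zs [C zsP]]] X_fooling]]]]]].
pose M := maxn (size u) (size v).
apply: (@exponential_of_pow2_le _ (size u2 + C) (M + C).+1) => // k.
have [Z_zs size_zs fooling] := zsP k.
have := @card_le_growth _ _ t X _
  (fun bs : k.-tuple bool => u2 ++ star2_word u v bs ++ zs k) (size u2 + C + (M + C).+1 * k).
rewrite card_tuple card_bool; apply.
- move=> bs; apply: X_fooling.
  by exists u2, (star2_word u v bs), (zs k); do ![split] => //; [left | exists bs].
- move=> bs; have := size_star2_word u v bs; set w := star2_word u v bs.
  by rewrite !size_cat (size_tuple bs); nia.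
- move=> bs bs' E; apply: val_inj.
  by apply: (fooling_expansion_inj su2 sv2 size_u2v2 fooling (s := [::]));
    rewrite ?addn0 ?size_tuple.
Qed.
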